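(* Let $M$, $N$ and $Y$ be real normed spaces. Assume that $T\in L(M\oplus_\infty N,Y)$ and $m\in M$, $n\in N$ are such that $m+n$ lies in the unit sphere of $M\oplus_\infty N$, $\Vert n\Vert<1$ and $\Vert T(m+n)\Vert=\Vert T\Vert$. Then $\Vert T(m)\Vert=\Vert T\Vert$.
   Context: $M\oplus_\infty N$ denotes the direct sum with norm $\Vert m+n\Vert=\max\{\Vert m\Vert,\Vert n\Vert\}$. $L(X,Y)$ is the space of bounded linear operators with the operator norm. *)

From HB Require Import structures.
From mathcomp Require Import all_boot all_order all_algebra.
From mathcomp Require Import all_classical all_reals all_analysis.
Set Implicit Arguments. Unset Strict Implicit. Unset Printing Implicit Defensive.
Import Order.TTheory GRing.Theory Num.Theory.
Local Open Scope classical_set_scope.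
Local Open Scope ring_scope.

(* Norm of M (+)_oo N, realised on the product type M * N:
   ||(m, n)|| = max(||m||, ||n||). *)
Definition infnorm (R : realType) (M N : normedModType R) (x : M * N) : R :=
  Num.max `|x.1| `|x.2|.

Definition bounded_op (R : realType) (M N Y : normedModType R)
  (T : {linear (M * N)%type -> Y}) : Prop :=
  exists C : R, forall x : M * N, `|T x| <= C * infnorm x.

Definition opnorm (R : realType) (M N Y : normedModType R)
  (T : {linear (M * N)%type -> Y}) : R :=
  sup [set `|T x| | x in [set x : M * N | infnorm x <= 1]].

(* The point (m, n) is the convex combination (1 - |n|) (m, 0) + |n| (m, n/|n|)
   of two points of the unit ball (with n/|n| = 0 when n = 0), and 1 - |n| > 0.  Since ||T|| bounds |T| on the
   unit ball, |T (m, n)| = ||T|| forces |T (m, 0)| >= ||T||. *)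
From HB Require Import structures.
From mathcomp Require Import all_boot all_order all_algebra.
From mathcomp Require Import all_classical all_reals all_analysis.
Import Order.TTheory GRing.Theory Num.Theory.
Local Open Scope ring_scope.

Section NormedModule.
Variables (R : realType) (V : normedModType R).

Lemma scale_norm_normalize (v : V) : `|v| *: (`|v|^-1 *: v) = v.
Proof.
have [->|v0] := eqVneq v 0; first by rewrite !scaler0.
by rewrite scalerA divff ?scale1r ?normr_eq0.
Qed.

Lemma norm_normalize_le1 (v : V) : `| `|v|^-1 *: v| <= 1.
Proof.
have [->|v0] := eqVneq v 0; first by rewrite scaler0 normr0 ler01.
by rewrite normrZ normfV normr_id mulVf ?normr_eq0.
Qed.

Lemma norm_convex_max_l (y1 y2 : V) (K s : R) :
  0 <= s < 1 -> `|y2| <= K -> K <= `|(1 - s) *: y1 + s *: y2| -> K <= `|y1|.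
Proof.
move=> /andP[s_ge0 s_lt1] y2_le hK.
have s'_gt0 : 0 < 1 - s by rewrite subr_gt0.
have : K <= (1 - s) * `|y1| + s * K.
  apply: (le_trans hK); apply: (le_trans (ler_normD _ _)).
  by rewrite !normrZ !ger0_norm ?(ltW s'_gt0) // lerD2l ler_wpM2l.
by move=> h; rewrite -(ler_pM2l s'_gt0) mulrBl mul1r lerBlDr.
Qed.

End NormedModule.

Lemma infnorm_le1 (R : realType) (M N : normedModType R) (x : M * N) :
  (infnorm x <= 1) = (`|x.1| <= 1) && (`|x.2| <= 1).
Proof. by rewrite /infnorm ge_max. Qed.

Lemma pair_convex_normalize (R : realType) (M N : normedModType R) (m : M) (n : N) :
  (m, n) = (1 - `|n|) *: (m, 0) + `|n| *: (m, `|n|^-1 *: n).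
Proof.
congr pair => /=; first by rewrite -scalerDl subrK scale1r.
by rewrite scaler0 add0r scale_norm_normalize.
Qed.

Lemma norm_le_opnorm (R : realType) (M N Y : normedModType R)
  (T : {linear (M * N)%type -> Y}) (x : M * N) :
  bounded_op T -> infnorm x <= 1 -> `|T x| <= opnorm T.
Proof.
move=> [C HC] x_le1; apply: ub_le_sup; last by exists x.
exists `|C| => _ [y y_le1 <-].
have y_ge0 : 0 <= infnorm y by rewrite /infnorm le_max normr_ge0.
apply: (le_trans (HC y)); apply: (le_trans (ler_wpM2r y_ge0 (ler_norm C))).
by rewrite ler_piMr.
Qed.

Theorem lemma4p1 (R : realType) (M N Y : normedModType R)
  (T : {linear (M * N)%type -> Y}) (m : M) (n : N) :
  bounded_op T ->
  infnorm (m, n) = 1 ->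
  `|n| < 1 ->
  `|T (m, n)| = opnorm T ->
  `|T (m, 0)| = opnorm T.
Proof.
move=> hT mn_eq1 n_lt1 Tmn.
have : infnorm (m, n) <= 1 by rewrite mn_eq1.
rewrite infnorm_le1 => /andP[/= m_le1 _].
apply/eqP; rewrite eq_le norm_le_opnorm ?infnorm_le1 ?m_le1 ?normr0 ?ler01 //=.
apply: (@norm_convex_max_l _ _ _ (T (m, `|n|^-1 *: n)) _ `|n|).
- by rewrite normr_ge0.
- by rewrite norm_le_opnorm ?infnorm_le1 ?m_le1 ?norm_normalize_le1.
- by rewrite -Tmn -!linearZ -linearD -pair_convex_normalize.
Qed.
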